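(* Let $\rho$ be a state of $n$ qubits, $r\ge0$ an integer, $\eta\in(0,1]$. Define $$W_r^*=\inf\Big\{\beta^{-1}\sum_{i\in\mathcal W}\log\operatorname{tr}(\Gamma_i)\ :\ \mathcal W\subseteq\{1,\dots,n\},\ \mathcal E_1,\dots,\mathcal E_r\in\mathcal T,\ \langle0^n|\mathcal E(\rho)|0^n\rangle\ge\eta\Big\},$$ where $\mathcal E=\big(\prod_{i\in\mathcal W}R_i\big)\circ\mathcal E_r\circ\cdots\circ\mathcal E_1$. Then $\beta W_r^*=-D^{r,\eta}_h(\rho\|\Gamma)$, and consequently $$-D^{r,\eta}_H(\rho\|\Gamma)-\log(1/\eta)\le\beta W_r^*\le-D^{r,\eta}_H(\rho\|\Gamma).$$
   Context: All logarithms are natural. Consider $n$ qubits; qubit $i$ has Hamiltonian $H_i$ with $H_i|0\rangle=0$, $H_i|1\rangle=E_i|1\rangle$, $E_i\ge0$. Fix $\beta>0$, and let $\Gamma_i=e^{-\beta H_i}$, $\Gamma=\bigotimes_{i=1}^n\Gamma_i$. Let $\mathcal T$ be a set of completely positive trace-preserving maps on the $n$ qubits, containing the identity map, such that $\mathcal F(\Gamma)=\Gamma$ for every $\mathcal F\in\mathcal T$. $R_i$ denotes the reset of qubit $i$: $R_i(X)=|0\rangle\langle0|_i\otimes\operatorname{tr}_i(X)$. Let $\mathcal P_0=\{\bigotimes_{i=1}^n Q_i: Q_i\in\{|0\rangle\langle0|,\mathbb 1_2\}\}$ and $\mathcal M^r=\{\mathcal E_1^\dagger\cdots\mathcal E_r^\dagger(P):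 P\in\mathcal P_0,\ \mathcal E_j\in\mathcal T\}$ (Hilbert–Schmidt adjoints). For a state $\rho$ and positive semidefinite $\Gamma$: the reduced complexity relative entropy is $D^{r,\eta}_h(\rho\|\Gamma)=-\log\inf\{\operatorname{tr}(Q\Gamma): Q\in\mathcal M^r,\operatorname{tr}(Q\rho)\ge\eta\}$, and the complexity relative entropy is $D^{r,\eta}_H(\rho\|\Gamma)=-\log\inf\{\operatorname{tr}(Q\Gamma)/\operatorname{tr}(Q\rho): Q\in\mathcal M^r,\operatorname{tr}(Q\rho)\ge\eta\}$. *)

From HB Require Import structures.
From mathcomp Require Import all_boot all_order all_algebra.
From mathcomp Require Import all_classical all_reals all_analysis.
From mathcomp Require Import complex.
Set Implicit Arguments. Unset Strict Implicit. Unset Printing Implicit Defensive.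
Import Order.TTheory GRing.Theory Num.Theory.
Local Open Scope ring_scope.
Local Open Scope complex_scope.
Local Open Scope classical_set_scope.

(* An operator on C^K (K a finite index set = computational basis) is given by
   its matrix entries  A x y = <x|A|y>. *)
Definition opK (R : realType) (K : finType) := K -> K -> R[i].

Definition trK (R : realType) (K : finType) (A : opK R K) : R[i] :=
  \sum_(x : K) A x x.

Definition opmulK (R : realType) (K : finType) (A B : opK R K) : opK R K :=
  fun x y => \sum_(z : K) A x z * B z y.

(* positive semidefinite: <v|A|v> >= 0 for every vector v (in the partial
   order of C, this forces <v|A|v> to be real and nonnegative) *)
Definition psdK (R : realType) (K : finType) (A : opK R K) : Prop :=
  forall v : K -> R[i], 0 <= \sum_(x : K) \sum_(y : K) (v x)^* * A x y * v y.

Definition basis (n : nat) := {ffun 'I_n -> bool}.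
Definition Op (R : realType) (n : nat) := opK R (basis n).
Definition Map (R : realType) (n : nat) := Op R n -> Op R n.

Definition tr (R : realType) (n : nat) (A : Op R n) : R[i] := trK A.
Definition opmul (R : realType) (n : nat) (A B : Op R n) : Op R n := opmulK A B.

Definition zeros (n : nat) : basis n := [ffun => false].

Definition is_state (R : realType) (n : nat) (rho : Op R n) : Prop :=
  psdK rho /\ tr rho = 1.

Definition linear_map (R : realType) (n : nat) (F : Map R n) : Prop :=
  forall (a : R[i]) (X Y : Op R n),
    F (fun x y => a * X x y + Y x y) = (fun x y => a * F X x y + F Y x y).

(* F (x) id_k acting on operators on (n qubits) (x) C^k:
   ((F (x) id)(X))((x,p),(y,q)) = F(X_{pq})(x,y), X_{pq}(x,y) = X((x,p),(y,q)) *)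
Definition ampl (R : realType) (n k : nat) (F : Map R n)
  (X : opK R (prod (basis n) 'I_k)) : opK R (prod (basis n) 'I_k) :=
  fun a b => F (fun x y => X (x, a.2) (y, b.2)) a.1 b.1.

Definition completely_positive (R : realType) (n : nat) (F : Map R n) : Prop :=
  forall (k : nat) (X : opK R (prod (basis n) 'I_k)), psdK X -> psdK (ampl F X).

Definition trace_preserving (R : realType) (n : nat) (F : Map R n) : Prop :=
  forall X : Op R n, tr (F X) = tr X.

Definition CPTP (R : realType) (n : nat) (F : Map R n) : Prop :=
  [/\ linear_map F, completely_positive F & trace_preserving F].

Definition qop (R : realType) := bool -> bool -> R[i].
Definition ket0bra0 (R : realType) : qop R := fun b c => (~~ b && ~~ c)%:R.
Definition id2 (R : realType) : qop R := fun b c => (b == c)%:R.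
Definition qtr (R : realType) (q : qop R) : R[i] := q false false + q true true.

(* Gamma_i = exp(-beta H_i), with H_i = diag(0, E_i) in the basis |0>,|1>,
   hence Gamma_i = diag(1, exp(-beta E_i)) *)
Definition gamma1 (R : realType) (beta Ei : R) : qop R :=
  fun b c => if b == c then (if b then (expR (- (beta * Ei)))%:C else 1) else 0.

Definition tens (R : realType) (n : nat) (qs : 'I_n -> qop R) : Op R n :=
  fun x y => \prod_(i < n) qs i (x i) (y i).

Definition Gamma (R : realType) (n : nat) (beta : R) (E : 'I_n -> R) : Op R n :=
  tens (fun i => gamma1 beta (E i)).

Definition fset_at (n : nat) (x : basis n) (i : 'I_n) (b : bool) : basis n :=
  [ffun j => if j == i then b else x j].

(* R_i(X) = |0><0|_i (x) tr_i(X) *)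
Definition reset (R : realType) (n : nat) (i : 'I_n) : Map R n :=
  fun X x y => @ket0bra0 R (x i) (y i) *
               \sum_(b : bool) X (fset_at x i b) (fset_at y i b).

Definition resetW (R : realType) (n : nat) (W : {set 'I_n}) : Map R n :=
  foldr (fun i F => @reset R n i \o F) id (enum W).

Definition chain (R : realType) (n r : nat) (Es : 'I_r -> Map R n) : Map R n :=
  fun X => foldl (fun Y j => Es j Y) X (enum 'I_r).

(* Hilbert-Schmidt adjoint F^dagger, characterised by
   tr(A^dagger F(B)) = tr(F^dagger(A)^dagger B); explicitly
   F^dagger(A)_{yx} = sum_{ij} A_{ij} conj(F(|y><x|)_{ij}). *)
Definition unitop (R : realType) (n : nat) (y x : basis n) : Op R n :=
  fun a b => ((a == y) && (b == x))%:R.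
Definition hs_adj (R : realType) (n : nat) (F : Map R n) : Map R n :=
  fun A y x => \sum_(i : basis n) \sum_(j : basis n) A i j * (F (@unitop R n y x) i j)^*.

Definition adj_chain (R : realType) (n r : nat) (Es : 'I_r -> Map R n) : Map R n :=
  fun P => foldr (fun j Y => hs_adj (Es j) Y) P (enum 'I_r).

Definition in_P0 (R : realType) (n : nat) (P : Op R n) : Prop :=
  exists qs : 'I_n -> qop R,
    (forall i, qs i = @ket0bra0 R \/ qs i = @id2 R) /\ P = tens qs.

Definition in_Mr (R : realType) (n : nat) (T : Map R n -> Prop) (r : nat)
  (Q : Op R n) : Prop :=
  exists (P : Op R n) (Es : 'I_r -> Map R n),
    [/\ in_P0 P, (forall j, T (Es j)) & Q = adj_chain Es P].

Definition D_h (R : realType) (n : nat) (T : Map R n -> Prop) (r : nat) (eta : R)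
  (rho G : Op R n) : R :=
  - ln (inf [set t : R | exists Q : Op R n,
            [/\ in_Mr T r Q, eta%:C <= tr (opmul Q rho) & t = complex.Re (tr (opmul Q G))]]).

Definition D_H (R : realType) (n : nat) (T : Map R n -> Prop) (r : nat) (eta : R)
  (rho G : Op R n) : R :=
  - ln (inf [set t : R | exists Q : Op R n,
            [/\ in_Mr T r Q, eta%:C <= tr (opmul Q rho) &
                t = complex.Re (tr (opmul Q G) / tr (opmul Q rho))]]).

Definition Wstar (R : realType) (n : nat) (T : Map R n -> Prop) (r : nat) (eta beta : R)
  (E : 'I_n -> R) (rho : Op R n) : R :=
  inf [set w : R | exists (W : {set 'I_n}) (Es : 'I_r -> Map R n),
         [/\ (forall j, T (Es j)),
             eta%:C <= (@resetW R n W (chain Es rho)) (zeros n) (zeros n) &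
             w = beta^-1 * \sum_(i in W) ln (complex.Re (qtr (gamma1 beta (E i))))]].

From Pilot Require Import Defs.
From HB Require Import structures.
From mathcomp Require Import all_boot all_order all_algebra.
From mathcomp Require Import all_classical all_reals all_analysis.
From mathcomp Require Import complex lra.
Import Order.TTheory GRing.Theory Num.Theory.
Local Open Scope ring_scope.
Local Open Scope complex_scope.
Set Implicit Arguments. Unset Strict Implicit. Unset Printing Implicit Defensive.

(* Every [Q] in [M^r] has the form [E_1^† ... E_r^† (P_W)], where [P_W] in [P_0]
   projects the qubits outside [W] onto [|0>].  By Hilbert-Schmidt duality
   [tr(Q rho) = <0^n| R_W (E_r ... E_1 (rho)) |0^n>] is the success probability
   of the protocol [(W, E)], while, every [E_j] fixing [Gamma],
   [tr(Q Gamma) = tr(P_W Gamma) = prod_{i in W} tr Gamma_i].  Hence the infima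
   defining [W_r^*] and [D_h] range over the same feasible sets [W] and are both
   attained at a cost-minimal one.  For [D_H], the ratio [tr(Q Gamma) / tr(Q rho)]
   lies between [tr(Q Gamma)] and [tr(Q Gamma) / eta] since [eta <= tr(Q rho) <= 1]. *)

Lemma sum_mul_delta (S : pzSemiRingType) (K : finType) (f : K -> S) (c : S) (a : K) :
  \sum_(y : K) f y * (c * (y == a)%:R) = f a * c.
Proof.
rewrite (bigD1 a) //= eqxx mulr1 big1 ?addr0 // => y /negbTE ->.
by rewrite !mulr0.
Qed.

Section PsdOperators.
Variables (R : realType) (K : finType).
Implicit Types (A : opK R K) (f : K -> R[i]).

Lemma quad_form_pair A (c d : R[i]) (a b : K) :
  \sum_(x : K) \sum_(y : K) (c * (x == a)%:R + d * (x == b)%:R)^* * A x y *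
                            (c * (y == a)%:R + d * (y == b)%:R) =
  (A a a * c + A a b * d) * c^* + (A b a * c + A b b * d) * d^*.
Proof.
have sum_v f (c' d' : R[i]) :
    \sum_(y : K) f y * (c' * (y == a)%:R + d' * (y == b)%:R) = f a * c' + f b * d'.
  by under eq_bigr do rewrite mulrDr; rewrite big_split /= !sum_mul_delta.
under eq_bigr => x _.
  rewrite (sum_v (fun y => _ * A x y)) -!mulrA -mulrDr mulrC.
  rewrite rmorphD !rmorphM /= !rmorph_nat.
over.
by rewrite sum_v.
Qed.

Lemma psdK_diag_ge0 A a : psdK A -> 0 <= A a a.
Proof.
move=> /(_ (fun x => 1 * (x == a)%:R + 0 * (x == a)%:R)).
by rewrite quad_form_pair rmorph0 rmorph1 !mulr0 !mulr1 !addr0.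
Qed.

(* Polarization: the quadratic form is real on [e_a + e_b] and on [e_a + i e_b]. *)
Lemma psdK_herm A a b : psdK A -> A b a = (A a b)^*.
Proof.
move=> hA.
have ha := geC0_conj (psdK_diag_ge0 a hA).
have hb := geC0_conj (psdK_diag_ge0 b hA).
have h1 := geC0_conj (hA (fun x => 1 * (x == a)%:R + 1 * (x == b)%:R)).
have h2 := geC0_conj (hA (fun x => 1 * (x == a)%:R + 'i * (x == b)%:R)).
rewrite quad_form_pair in h1; rewrite quad_form_pair in h2.
move: h1 h2 ha hb.
case: (A a a) => [x1 x2]; case: (A a b) => [p1 p2]; case: (A b a) => [q1 q2];
case: (A b b) => [y1 y2] /=.
simpc; move=> [h1] [h2] [hx] [hy].
by apply/eqP; rewrite eq_complex /=; apply/andP; split; apply/eqP; lra.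
Qed.

End PsdOperators.

Section LinearMaps.
Variables (R : realType) (n : nat) (F : Map R n).
Hypothesis F_lin : linear_map F.

Lemma linear_map0 : F (fun _ _ => 0) = fun _ _ => 0.
Proof.
have := F_lin 1 (fun _ _ => 0) (fun _ _ => 0).
have -> : (fun x y : Defs.basis n => (1 : R[i]) * 0 + 0) = (fun _ _ => 0).
  by apply/funext => x; apply/funext => y; rewrite mulr0 addr0.
move=> h; apply/funext => x; apply/funext => y.
have /= e := congr1 (fun G => G x y) h.
apply: (addrI (F (fun _ _ => 0) x y)); rewrite addr0.
by rewrite {3}e mul1r.
Qed.

Lemma linear_map_sum (I : Type) (s : seq I) (c : I -> R[i]) (X : I -> Op R n) :
  F (fun a b => \sum_(k <- s) c k * X k a b) =
  fun i j => \sum_(k <- s) c k * F (X k) i j.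
Proof.
elim: s => [|k s IH].
  under eq_fun do under eq_fun do rewrite big_nil.
  rewrite linear_map0; apply/funext => x; apply/funext => y; by rewrite big_nil.
under eq_fun do under eq_fun do rewrite big_cons.
rewrite F_lin IH; apply/funext => x; apply/funext => y; by rewrite big_cons.
Qed.

Lemma linear_map_unitop (B : Op R n) i j :
  F B i j = \sum_(p : Defs.basis n * Defs.basis n) B p.1 p.2 * F (unitop R p.1 p.2) i j.
Proof.
have decB : B = fun a b =>
    \sum_(p : Defs.basis n * Defs.basis n) B p.1 p.2 * unitop R p.1 p.2 a b.
  apply/funext => a; apply/funext => b.
  rewrite (bigD1 (a, b)) //= /unitop !eqxx mulr1 big1 ?addr0 // => -[y x] /= hne.
  by rewrite (eq_sym a) (eq_sym b) -xpair_eqE (negbTE hne) mulr0.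
by rewrite {1}decB linear_map_sum.
Qed.

End LinearMaps.

Lemma sum_pair_ord1 (V : nmodType) (K : finType) (f : K * 'I_1 -> V) :
  \sum_(a : K * 'I_1) f a = \sum_(x : K) f (x, ord0).
Proof.
transitivity (\sum_(a : K * 'I_1) f (a.1, a.2)); first by apply: eq_bigr => -[].
rewrite -(pair_bigA _ (fun x p => f (x, p))) /=.
by apply: eq_bigr => x _; rewrite big_ord1.
Qed.

Lemma cp_psdK (R : realType) n (F : Map R n) (B : Op R n) :
  completely_positive F -> psdK B -> psdK (F B).
Proof.
move=> hF hB w.
pose X : opK R (Defs.basis n * 'I_1)%type := fun a b => B a.1 b.1.
have hX : psdK X.
  move=> v; rewrite sum_pair_ord1; under eq_bigr do rewrite sum_pair_ord1.
  exact: (hB (fun x => v (x, ord0))).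
have := hF 1%N X hX (fun a => w a.1).
by rewrite sum_pair_ord1; under eq_bigr do rewrite sum_pair_ord1.
Qed.

(* [hs_adj] conjugates [F (unitop y x)] entrywise, so the duality needs the
   hermiticity of [B] and [F B]. *)
Lemma tr_hs_adj (R : realType) n (F : Map R n) (A B : Op R n) :
  linear_map F -> completely_positive F -> psdK B ->
  tr (opmul (hs_adj F A) B) = tr (opmul A (F B)).
Proof.
move=> hL hC hB.
rewrite /tr /trK /opmul /opmulK /hs_adj.
under [RHS]eq_bigr => i _.
  under eq_bigr => j _.
    rewrite (psdK_herm _ _ (cp_psdK hC hB)) (linear_map_unitop hL).
    rewrite rmorph_sum mulr_sumr.
    rewrite (eq_bigr (fun p => A i j * B p.2 p.1 * (F (unitop R p.1 p.2) i j)^*)); last first.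
      by move=> p _; rewrite rmorphM /= -(psdK_herm _ _ hB) mulrA.
  over.
  rewrite exchange_big /=.
over.
rewrite [RHS]exchange_big pair_bigA /=; apply: eq_bigr => -[x z] _ /=.
rewrite mulr_suml; apply: eq_bigr => i _.
rewrite mulr_suml; apply: eq_bigr => j _.
by rewrite mulrAC.
Qed.

Section Chains.
Variables (R : realType) (n r : nat) (Es : 'I_r -> Map R n).
Hypothesis Es_CPTP : forall j, CPTP (Es j).

Lemma chain_psdK X : psdK X -> psdK (chain Es X).
Proof.
rewrite /chain; elim: (enum 'I_r) X => [|j s IH] X hX //=.
by apply: IH; case: (Es_CPTP j) => _ hC _; exact: cp_psdK.
Qed.

Lemma tr_chain X : tr (chain Es X) = tr X.
Proof.
rewrite /chain; elim: (enum 'I_r) X => [|j s IH] X //=.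
by rewrite IH; case: (Es_CPTP j) => _ _ ->.
Qed.

Lemma tr_adj_chain P X : psdK X ->
  tr (opmul (adj_chain Es P) X) = tr (opmul P (chain Es X)).
Proof.
rewrite /adj_chain /chain; elim: (enum 'I_r) X => [|j s IH] X hX //=.
case: (Es_CPTP j) => hL hC _.
by rewrite tr_hs_adj // IH //; exact: cp_psdK.
Qed.

End Chains.

Lemma chain_fix (R : realType) n r (Es : 'I_r -> Map R n) (G : Op R n) :
  (forall j, Es j G = G) -> chain Es G = G.
Proof. by rewrite /chain => hE; elim: (enum 'I_r) => [|j s IH] //=; rewrite hE. Qed.

Lemma prod_nat_bool (S : comPzSemiRingType) (I : finType) (P : pred I) :
  \prod_(i : I) ((P i)%:R : S) = ([forall i, P i])%:R.
Proof.
case: (boolP [forall i, P i]) => [/forallP h | /forallPn [i hi]].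
  by rewrite big1 // => i _; rewrite h.
by rewrite (bigD1 i) //= (negbTE hi) mul0r.
Qed.

Section ProjectorsP0.
Variables (R : realType) (n : nat).
Implicit Types (W : {set 'I_n}) (x z : Defs.basis n) (Y : Op R n).

Definition projW W : Op R n :=
  tens (fun i => if i \in W then @id2 R else @ket0bra0 R).

Definition zero_off W x : bool := [forall i, (i \notin W) ==> ~~ x i].

Lemma projW_entry W x z : projW W x z = (x == z)%:R * (zero_off W x)%:R.
Proof.
rewrite /projW /tens.
rewrite (eq_bigr (fun i => ((x i == z i)%:R : R[i]) * ((i \notin W) ==> ~~ x i)%:R)); last first.
  move=> i _; rewrite /id2 /ket0bra0.
  by case: (i \in W); case: (x i); case: (z i); rewrite /= ?mulr1 ?mulr0 ?mul0r.
rewrite big_split /= !prod_nat_bool.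
suff -> : [forall i, x i == z i] = (x == z) by [].
by apply/forallP/eqP => [h|-> i //]; apply/ffunP => i; apply/eqP.
Qed.

Lemma tr_projW_mul W Y :
  tr (opmul (projW W) Y) = \sum_x (zero_off W x)%:R * Y x x.
Proof.
rewrite /tr /trK /opmul /opmulK; apply: eq_bigr => x _.
rewrite (bigD1 x) //= projW_entry eqxx mul1r big1 ?addr0 // => z hz.
by rewrite projW_entry eq_sym (negbTE hz) !mul0r.
Qed.

Lemma tr_projW_le1 W Y : psdK Y -> tr Y = 1 -> tr (opmul (projW W) Y) <= 1.
Proof.
move=> hY <-; rewrite tr_projW_mul /tr /trK; apply: ler_sum => x _.
by case: (zero_off W x); rewrite ?mul1r ?mul0r //; exact: psdK_diag_ge0.
Qed.

Lemma in_P0_projW P : in_P0 P <-> exists W, P = projW W.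
Proof.
split=> [[qs [hqs ->]]|[W ->]]; last first.
  exists (fun i => if i \in W then @id2 R else @ket0bra0 R); split => // i.
  by case: (i \in W); [right|left].
have ket0_neq_id2 : @ket0bra0 R <> @id2 R.
  move=> /(congr1 (fun q => q true true)); rewrite /ket0bra0 /id2 /=.
  by move/eqP; rewrite eq_sym oner_eq0.
exists [set i | `[< qs i = @id2 R >]].
rewrite /projW; congr tens; apply/funext => i; rewrite inE.
by case: (hqs i) => ->; [rewrite (asboolF ket0_neq_id2)| rewrite asboolT].
Qed.

End ProjectorsP0.

Lemma qtr_gamma1 (R : realType) (beta e : R) :
  qtr (gamma1 beta e) = (1 + expR (- (beta * e)))%:C.
Proof. by rewrite /qtr /gamma1 /= rmorphD. Qed.

Lemma tr_projW_Gamma (R : realType) n (W : {set 'I_n}) (beta : R) (E : 'I_n -> R) :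
  tr (opmul (projW R W) (Gamma beta E)) = \prod_(i in W) qtr (gamma1 beta (E i)).
Proof.
rewrite tr_projW_mul.
pose F := fun (i : 'I_n) (b : bool) =>
  (((i \notin W) ==> ~~ b)%:R : R[i]) * gamma1 beta (E i) b b.
transitivity (\sum_(x : Defs.basis n) \prod_(i : 'I_n) F i (x i)).
  by apply: eq_bigr => x _; rewrite /F big_split /= prod_nat_bool.
rewrite -(bigA_distr_bigA F) [RHS]big_mkcond /=; apply: eq_bigr => i _.
rewrite big_bool /F /qtr /gamma1 /=.
by case: (i \in W); rewrite /= ?mul1r ?mul0r ?add0r ?addr0 // addrC.
Qed.

Lemma Gamma_psdK (R : realType) n (beta : R) (E : 'I_n -> R) : psdK (Gamma beta E).
Proof.
move=> v; apply: sumr_ge0 => x _.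
rewrite (bigD1 x) //= big1 ?addr0; last first.
  move=> y hy; have [i hi] : exists i, x i != y i.
    apply/existsP; apply: contraNT hy => /existsPn h; apply/eqP/ffunP => i.
    by have := h i; rewrite negbK => /eqP.
  rewrite /Gamma /tens (bigD1 i) //= /gamma1 (negbTE hi).
  by rewrite mul0r mulr0 mul0r.
rewrite mulrAC; apply: mulr_ge0; first by rewrite mulrC; exact: mulcJ_ge0.
apply: prodr_ge0 => i _; rewrite /gamma1 eqxx.
by case: (x i) => //; rewrite ler0c ltW ?expR_gt0.
Qed.

Section Resets.
Variables (R : realType) (n : nat).
Implicit Types (s : seq 'I_n) (W : {set 'I_n}) (x z : Defs.basis n) (X Y : Op R n).

Definition agree_off s z x : bool := [forall j, (j \notin s) ==> (z j == x j)].

Lemma agree_off_cons s i z x b : i \notin s ->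
  agree_off s z (fset_at x i b) = (z i == b) && agree_off (i :: s) z x.
Proof.
move=> his; rewrite /agree_off /fset_at.
apply/forallP/andP => [h|[/eqP hzi /forallP h] j].
  split; first by have := h i; rewrite his ffunE eqxx.
  apply/forallP => j; apply/implyP; rewrite in_cons negb_or => /andP [hji hjs].
  by have := h j; rewrite hjs ffunE (negbTE hji).
rewrite ffunE; case: (eqVneq j i) => [->|hji]; first by rewrite hzi eqxx implybT.
by apply/implyP => hjs; have := h j; rewrite in_cons negb_or hji hjs.
Qed.

Definition resets s : Map R n := foldr (fun i F => @reset R n i \o F) id s.

Lemma resets_diag s X x : uniq s ->
  resets s X x x =
  (\prod_(i <- s) ((~~ x i)%:R : R[i])) * \sum_z (agree_off s z x)%:R * X z z.
Proof.
elim: s X x => [|i s IH] X x.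
  move=> _; rewrite /= big_nil mul1r (bigD1 x) //= big1.
    have -> // : agree_off [::] x x by apply/forallP => j; rewrite eqxx implybT.
    by rewrite mul1r addr0.
  move=> z hz; have -> : agree_off [::] z x = false; last by rewrite mul0r.
  apply/negbTE/negP => /forallP h; apply: (negP hz); apply/eqP/ffunP => j.
  by apply/eqP; have := h j.
move=> /andP [his hu].
rewrite [LHS]/= /reset /ket0bra0 andbb big_cons -mulrA; congr (_ * _).
under [LHS]eq_bigr => b _ do rewrite (IH X (fset_at x i b) hu).
have hp b : \prod_(j <- s) ((~~ fset_at x i b j)%:R : R[i]) = \prod_(j <- s) (~~ x j)%:R.
  apply: eq_big_seq => j hj; rewrite /fset_at ffunE.
  by have -> : (j == i) = false by apply/negbTE; apply: contraNneq his => <-.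
under [LHS]eq_bigr => b _ do rewrite hp.
rewrite -mulr_sumr; congr (_ * _).
rewrite exchange_big /=; apply: eq_bigr => z _.
rewrite -mulr_suml; congr (_ * _).
under eq_bigr => b _ do rewrite agree_off_cons //.
by rewrite big_bool /=; case: (z i); case: (agree_off (i :: s) z x); rewrite /= ?addr0 ?add0r.
Qed.

Lemma resetW_zeros W Y :
  @resetW R n W Y (zeros n) (zeros n) = tr (opmul (projW R W) Y).
Proof.
change (resets (enum W) Y (zeros n) (zeros n) = tr (opmul (projW R W) Y)).
rewrite resets_diag ?enum_uniq // tr_projW_mul big1_seq ?mul1r; last first.
  by move=> i _; rewrite /zeros ffunE.
apply: eq_bigr => z _; congr ((nat_of_bool _)%:R * _).
rewrite /agree_off /zero_off; apply/idP/idP => /forallP h; apply/forallP => j;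
  by have := h j; rewrite mem_enum /zeros ffunE; case: (z j).
Qed.

End Resets.

Lemma inf_eq_min (R : realType) (S : set R) (m : R) :
  S m -> (forall x, S x -> m <= x) -> inf S = m.
Proof.
move=> Sm mS; apply/le_anti/andP; split; first by apply: ge_inf Sm; exists m.
by apply: lb_le_inf; first by exists m.
Qed.

(* Comparability with the real [e%:C] forces [b] to be real. *)
Lemma Re_div_bounds (R : realType) (p e : R) (b : R[i]) :
  0 <= p -> 0 < e -> e%:C <= b -> b <= 1 ->
  p <= complex.Re (p%:C / b) <= p / e.
Proof.
case: b => [a c] hp he; rewrite !lecE /= => /andP [/eqP hc hea] /andP [_ ha1]; subst c.
have ha : 0 < a by apply: lt_le_trans hea.
have -> : a / (a ^+ 2 + 0 ^+ 2) = a^-1.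
  by rewrite expr0n addr0 invfM mulrA divff ?mul1r // gt_eqF.
rewrite mul0r subr0; apply/andP; split.
  by apply: ler_peMr => //; rewrite invr_ge1 ?unitfE ?gt_eqF.
by apply: ler_wpM2l => //; rewrite lef_pV2 ?posrE.
Qed.

Section ComplexityEntropy.
Variables (R : realType) (n r : nat) (E : 'I_n -> R) (beta eta : R).
Variables (T : Map R n -> Prop) (rho : Op R n).
Hypotheses (beta_gt0 : 0 < beta) (T_CPTP : forall F, T F -> CPTP F) (T_id : T id).
Hypothesis T_Gamma : forall F, T F -> F (Gamma beta E) = Gamma beta E.
Hypotheses (rho_psd : psdK rho) (tr_rho : tr rho = 1) (eta_gt0 : 0 < eta) (eta_le1 : eta <= 1).

Definition success (W : {set 'I_n}) (Es : 'I_r -> Map R n) : R[i] :=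
  resetW W (chain Es rho) (zeros n) (zeros n).

Definition cost (W : {set 'I_n}) : R :=
  \sum_(i in W) ln (complex.Re (qtr (gamma1 beta (E i)))).

Definition feasible (W : {set 'I_n}) : Prop :=
  exists Es : 'I_r -> Map R n, (forall j, T (Es j)) /\ eta%:C <= success W Es.

Lemma expR_cost W : (expR (cost W))%:C = \prod_(i in W) qtr (gamma1 beta (E i)).
Proof.
rewrite /cost expR_sum rmorph_prod; apply: eq_bigr => i _.
by rewrite qtr_gamma1 lnK // posrE addr_gt0 ?expR_gt0.
Qed.

Section Protocol.
Variables (W : {set 'I_n}) (Es : 'I_r -> Map R n).
Hypothesis Es_T : forall j, T (Es j).

Let Es_CPTP j : CPTP (Es j). Proof. exact: T_CPTP. Qed.

Lemma tr_adj_chain_projW_rho :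
  tr (opmul (adj_chain Es (projW R W)) rho) = success W Es.
Proof. by rewrite tr_adj_chain // /success resetW_zeros. Qed.

Lemma tr_adj_chain_projW_Gamma :
  tr (opmul (adj_chain Es (projW R W)) (Gamma beta E)) = (expR (cost W))%:C.
Proof.
have chain_Gamma : chain Es (Gamma beta E) = Gamma beta E.
  by apply: chain_fix => j; apply: T_Gamma.
by rewrite (tr_adj_chain Es_CPTP _ (Gamma_psdK beta E)) chain_Gamma tr_projW_Gamma expR_cost.
Qed.

Lemma success_le1 : success W Es <= 1.
Proof.
by rewrite /success resetW_zeros tr_projW_le1 ?tr_chain //; exact: chain_psdK.
Qed.

End Protocol.

Lemma in_Mr_projW Q : in_Mr T r Q <->
  exists W (Es : 'I_r -> Map R n), (forall j, T (Es j)) /\ Q = adj_chain Es (projW R W).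
Proof.
split=> [[P [Es [/in_P0_projW [W ->] hEs ->]]]|[W [Es [hEs ->]]]].
  by exists W, Es.
by exists (projW R W), Es; split => //; apply/in_P0_projW; exists W.
Qed.

Lemma feasible_setT : feasible [set: 'I_n].
Proof.
exists (fun _ => id); split => //.
rewrite /success chain_fix // resetW_zeros tr_projW_mul.
under eq_bigr => x _.
  have -> : zero_off [set: 'I_n] x by apply/forallP => i; rewrite inE.
  rewrite mul1r.
over.
by rewrite -/(trK rho) -/(tr rho) tr_rho lecE /= eqxx eta_le1.
Qed.

Definition Wopt : {set 'I_n} :=
  [arg min_(W < [set: 'I_n] | `[< feasible W >]) cost W]%O.

Lemma Wopt_min : feasible Wopt /\ forall W, feasible W -> cost Wopt <= cost W.
Proof.
rewrite /Wopt; case: arg_minP => [|W /asboolP hW hmin]; first exact/asboolP/feasible_setT.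
by split=> // W' hW'; apply/hmin/asboolP.
Qed.

Lemma Wstar_cost : beta * Wstar T r eta beta E rho = cost Wopt.
Proof.
have [[Es [hEs hsucc]] hmin] := Wopt_min.
rewrite /Wstar (@inf_eq_min _ _ (beta^-1 * cost Wopt)).
- by rewrite mulrA divff ?mul1r ?gt_eqF.
- by exists Wopt, Es.
- move=> w [W [Es' [hEs' hsucc' ->]]].
  by apply: ler_wpM2l; [rewrite invr_ge0 ltW | apply: hmin; exists Es'].
Qed.

Lemma D_h_cost : D_h T r eta rho (Gamma beta E) = - cost Wopt.
Proof.
have [[Es [hEs hsucc]] hmin] := Wopt_min.
rewrite /D_h (@inf_eq_min _ _ (expR (cost Wopt))) ?expRK //.
- exists (adj_chain Es (projW R Wopt)); split.
  + by apply/in_Mr_projW; exists Wopt, Es.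
  + by rewrite tr_adj_chain_projW_rho.
  + by rewrite tr_adj_chain_projW_Gamma.
- move=> t [Q [/in_Mr_projW [W [Es' [hEs' ->]]] hQ ->]].
  rewrite tr_adj_chain_projW_Gamma // ler_expR; apply: hmin; exists Es'.
  by rewrite -tr_adj_chain_projW_rho.
Qed.

Lemma D_H_between : exists h, [/\ expR (cost Wopt) <= h, h <= expR (cost Wopt) / eta
  & D_H T r eta rho (Gamma beta E) = - ln h].
Proof.
have [[Es [hEs hsucc]] hmin] := Wopt_min.
rewrite /D_H; set S := (X in inf X).
have ratio_bounds W Es' : (forall j, T (Es' j)) -> eta%:C <= success W Es' ->
    let q := complex.Re (tr (opmul (adj_chain Es' (projW R W)) (Gamma beta E)) /
                         tr (opmul (adj_chain Es' (projW R W)) rho)) in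
    expR (cost W) <= q <= expR (cost W) / eta.
  move=> hEs' hs; rewrite /= tr_adj_chain_projW_rho // tr_adj_chain_projW_Gamma //.
  by apply: Re_div_bounds => //; exact: success_le1.
have S_lb t : S t -> expR (cost Wopt) <= t.
  move=> [Q [/in_Mr_projW [W [Es' [hEs' ->]]] hQ ->]].
  rewrite tr_adj_chain_projW_rho // in hQ.
  have /andP[+ _] := ratio_bounds W Es' hEs' hQ; apply: le_trans.
  by rewrite ler_expR; apply: hmin; exists Es'.
have S_opt : S (complex.Re (tr (opmul (adj_chain Es (projW R Wopt)) (Gamma beta E)) /
                            tr (opmul (adj_chain Es (projW R Wopt)) rho))).
  exists (adj_chain Es (projW R Wopt)); split => //.
    by apply/in_Mr_projW; exists Wopt, Es.
  by rewrite tr_adj_chain_projW_rho.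
exists (inf S); split => //.
- by apply: lb_le_inf => //; eexists; exact: S_opt.
- apply: le_trans (ge_inf _ S_opt) _; first by exists (expR (cost Wopt)).
  by have /andP[_ ->] := ratio_bounds Wopt Es hEs hsucc.
Qed.

End ComplexityEntropy.

Unset Implicit Arguments.

Theorem theoremE1 (R : realType) (n : nat) (E : 'I_n -> R) (beta : R)
  (T : Map R n -> Prop) (rho : Op R n) (r : nat) (eta : R) :
  (forall i, 0 <= E i) -> 0 < beta ->
  (forall F, T F -> CPTP F) -> T id ->
  (forall F, T F -> F (Gamma beta E) = Gamma beta E) ->
  is_state rho -> 0 < eta <= 1 ->
  beta * Wstar T r eta beta E rho = - D_h T r eta rho (Gamma beta E) /\
  - D_H T r eta rho (Gamma beta E) - ln (1 / eta) <= beta * Wstar T r eta beta E rho /\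
  beta * Wstar T r eta beta E rho <= - D_H T r eta rho (Gamma beta E).
Proof.
move=> _ hbeta hT hid hfix [hrho htr] /andP [heta0 heta1].
have [h [hlo hhi ->]] := D_H_between r hT hid hfix hrho htr heta0 heta1.
rewrite (Wstar_cost r E hbeta hid htr heta1) (D_h_cost r hT hid hfix hrho htr heta1).
rewrite !opprK; set c := cost E beta _.
have h_gt0 : 0 < h := lt_le_trans (expR_gt0 c) hlo.
split=> //; split; last by rewrite -ler_expR lnK.
have : ln h <= ln (expR c / eta) by rewrite ler_ln ?posrE ?divr_gt0 ?expR_gt0.
by rewrite ln_div ?posrE ?expR_gt0 // expRK div1r lnV ?posrE // opprK -lerBrDr.
Qed.
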